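(* For every round $k$-sphere $S\subset\mathbb R^n$ there are a classical linkage $\mathcal L$ in $\mathbb R^n$ and a vertex $v\in\mathcal V(\mathcal L)$ such that $S=\mathcal{SC}(\mathcal L,\{v\})$; moreover the map $\rho_v\colon\mathcal C(\mathcal L)\to\mathbb R^n$, $\varphi\mapsto\varphi(v)$, is an isomorphism onto its image $S$.
   Context: A classical linkage in $\mathbb R^n$ is $\mathcal L=(L,\ell,V,\mu)$: $L$ a finite one-dimensional simplicial complex (vertex set $\mathcal V(L)=\mathcal V(\mathcal L)$, edge set $\mathcal E(L)$), $\ell\colon\mathcal E(L)\to(0,\infty)$, $V\subset\mathcal V(L)$ fixed vertices, $\mu\colon V\to\mathbb R^n$. $\mathcal C(\mathcal L)=\{\varphi\colon\mathcal V(L)\to\mathbb R^n\mid\varphi(v)=\mu(v)\ (v\in V),\ |\varphi(v)-\varphi(w)|=\ell(vw)\ (vw\in\mathcal E(L))\}$ and $\mathcal{SC}(\mathcal L,W)=\{\varphi|_W\mid\varphi\in\mathcal C(\mathcal L)\}$. A round $k$-sphere in $\mathbb R^n$ is the set of points at distance $r>0$ from a center point within some $(k+1)$-dimensional affine subspace containing the center. A homeomorphism $g$ is an isomorphism if $g$ and $g^{-1}$ are restrictions of entire rational functions. *)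

From HB Require Import structures.
From mathcomp Require Import all_boot all_order all_algebra.
From mathcomp Require Import reals.
From mathcomp Require mpoly.

Set Implicit Arguments.
Unset Strict Implicit.
Unset Printing Implicit Defensive.

Import Order.TTheory GRing.Theory Num.Theory.
Local Open Scope ring_scope.

Section Defs.
Variable R : realType.

Definition enorm (n : nat) (x : 'rV[R]_n) : R :=
  Num.sqrt (\sum_(i < n) x 0 i ^+ 2).

Definition fdist (T : finType) (a b : {ffun T -> R}) : R :=
  Num.sqrt (\sum_(t : T) (a t - b t) ^+ 2).

(* A round k-sphere in R^n: points at distance r > 0 from a center c within a
   (k+1)-dimensional affine subspace c + rowspace(U) containing c. *)
Definition round_sphere (n k : nat) (S : 'rV[R]_n -> Prop) : Prop :=
  exists (c : 'rV[R]_n) (r : R) (U : 'M[R]_(k.+1, n)),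
    0 < r /\ \rank U = k.+1 /\
    forall x : 'rV[R]_n, S x <-> ((x - c <= U)%MS /\ enorm (x - c) = r).

(* A classical linkage in R^n: a finite 1-dimensional simplicial complex
   (vertex type lvert, edges = 2-element vertex sets), edge lengths > 0,
   fixed vertices lfixed with positions lmu. *)
Record linkage (n : nat) := Linkage {
  lvert : finType;
  ledges : {set {set lvert}};
  ledges_card : forall e, e \in ledges -> #|e| = 2%N;
  llen : {set lvert} -> R;
  llen_pos : forall e, e \in ledges -> 0 < llen e;
  lfixed : {set lvert};
  lmu : lvert -> 'rV[R]_n
}.
Arguments ledges {n} l.
Arguments llen {n} l _.
Arguments lfixed {n} l.
Arguments lmu {n} l _.

Definition config (n : nat) (L : linkage n) (phi : lvert L -> 'rV[R]_n) : Prop :=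
  (forall v, v \in lfixed L -> phi v = lmu L v) /\
  (forall (v w : lvert L), [set v; w] \in ledges L ->
      enorm (phi v - phi w) = llen L [set v; w]).

Arguments config {n} L phi.

(* C(L) as a subset of R^(V(L) x n), in coordinates *)
Definition cspace (n : nat) (L : linkage n) (a : {ffun (lvert L * 'I_n) -> R}) : Prop :=
  config L (fun v => \row_i a (v, i)).

Definition rho (n : nat) (L : linkage n) (v : lvert L)
    (a : {ffun (lvert L * 'I_n) -> R}) : {ffun 'I_n -> R} :=
  [ffun i => a (v, i)].

(* f restricted to X is the restriction of an entire rational (polynomial) map *)
Definition polymap_on (T T' : finType) (X : {ffun T -> R} -> Prop)
    (f : {ffun T -> R} -> {ffun T' -> R}) : Prop :=
  exists P : T' -> mpoly.mpoly #|T| R,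
    forall a, X a -> forall j,
      f a j = mpoly.meval (fun i : 'I_#|T| => a (enum_val i)) (P j).

Definition cont_on (T T' : finType) (X : {ffun T -> R} -> Prop)
    (f : {ffun T -> R} -> {ffun T' -> R}) : Prop :=
  forall a, X a -> forall e : R, 0 < e -> exists d : R, 0 < d /\
    forall b, X b -> fdist a b < d -> fdist (f a) (f b) < e.

Definition isomorphism (T T' : finType) (X : {ffun T -> R} -> Prop)
    (Y : {ffun T' -> R} -> Prop) (f : {ffun T -> R} -> {ffun T' -> R}) : Prop :=
  exists g : {ffun T' -> R} -> {ffun T -> R},
    (forall a, X a -> Y (f a)) /\ (forall b, Y b -> X (g b)) /\
    (forall a, X a -> g (f a) = a) /\ (forall b, Y b -> f (g b) = b) /\
    cont_on X f /\ cont_on Y g /\ polymap_on X f /\ polymap_on Y g.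

End Defs.

Arguments ledges {R n} l.
Arguments llen {R n} l _.
Arguments lfixed {R n} l.
Arguments lmu {R n} l _.
Arguments config {R n} L phi.
Arguments cspace {R n} L a.
Arguments rho {R n L} v a.

(** A row vector [y] lies in that row space iff it is
    orthogonal to every column [w_j] of [cokermx U].  Join one free vertex by
    bars to an anchor at [c] of length [r] and to anchors at [c + w_j] of
    length [sqrt (r^2 + |w_j|^2)]: once [|x - c| = r], Pythagoras turns the
    bar to [c + w_j] into the condition [(x - c) . w_j = 0].  Every other
    vertex is pinned, so evaluation at the free vertex is a coordinate
    projection whose inverse, filling in the pinned coordinates, is an
    isometry given by affine polynomials. *)

From HB Require Import structures.
From mathcomp Require Import all_boot all_order all_algebra.
From mathcomp Require Import reals.
From mathcomp Require mpoly.
From mathcomp Require Import lra.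
Import Order.TTheory GRing.Theory Num.Theory.
Local Open Scope ring_scope.

Set Implicit Arguments.
Unset Strict Implicit.
Unset Printing Implicit Defensive.

Section EuclideanRow.
Variables (R : realType) (n : nat).
Implicit Types y z : 'rV[R]_n.

Definition dotr y z : R := \sum_i y 0 i * z 0 i.

Lemma dotr0 y : dotr y 0 = 0.
Proof. by apply: big1 => i _; rewrite mxE mulr0. Qed.

Lemma enorm_ge0 y : 0 <= enorm y.
Proof. exact: sqrtr_ge0. Qed.

Lemma sqr_enorm y : enorm y ^+ 2 = \sum_i y 0 i ^+ 2.
Proof. by rewrite sqr_sqrtr // sumr_ge0 // => i _; rewrite sqr_ge0. Qed.

Lemma enorm0 : enorm (0 : 'rV[R]_n) = 0.
Proof. by rewrite /enorm big1 ?sqrtr0 // => i _; rewrite mxE expr0n. Qed.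

Lemma enormN y : enorm (- y) = enorm y.
Proof. by congr Num.sqrt; apply: eq_bigr => i _; rewrite mxE sqrrN. Qed.

Lemma sqr_enormB y z :
  enorm (y - z) ^+ 2 = enorm y ^+ 2 - dotr y z *+ 2 + enorm z ^+ 2.
Proof.
rewrite !sqr_enorm /dotr.
under eq_bigr do rewrite !mxE sqrrB.
by rewrite !big_split /= sumrN sumrMnl.
Qed.

Lemma enormB_pythagoras y z :
  enorm (y - z) = Num.sqrt (enorm y ^+ 2 + enorm z ^+ 2) <-> dotr y z = 0.
Proof.
have -> : enorm (y - z) = Num.sqrt (enorm (y - z) ^+ 2).
  by rewrite sqrtr_sqr ger0_norm ?enorm_ge0.
split => [/eqP | yz0]; last by rewrite sqr_enormB yz0 mul0rn subr0.
rewrite eqr_sqrt ?sqr_ge0 ?addr_ge0 ?sqr_ge0 // sqr_enormB => /eqP yz.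
have /eqP : dotr y z *+ 2 = 0 by lra.
by rewrite mulrn_eq0 => /eqP.
Qed.

Lemma submx_dotrP m (U : 'M[R]_(m, n)) y :
  (y <= U)%MS <-> forall j, dotr y (col j (cokermx U))^T = 0.
Proof.
have dotrE j : dotr y (col j (cokermx U))^T = (y *m cokermx U) 0 j.
  by rewrite mxE; apply: eq_bigr => i _; rewrite !mxE.
rewrite submxE; split => [/eqP yU0 j | yU0]; first by rewrite dotrE yU0 mxE.
by apply/eqP/rowP => j; rewrite -dotrE yU0 mxE.
Qed.

End EuclideanRow.

Section FiniteDistance.
Variable R : realType.

Lemma fdist_pairD1 (T I : finType) (v : T) (a b : {ffun T * I -> R}) :
  fdist a b = Num.sqrt (\sum_i (a (v, i) - b (v, i)) ^+ 2 +
                        \sum_(w | w != v) \sum_i (a (w, i) - b (w, i)) ^+ 2).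
Proof.
rewrite /fdist.
have -> : \sum_p (a p - b p) ^+ 2 = \sum_w \sum_i (a (w, i) - b (w, i)) ^+ 2.
  by rewrite pair_big; apply: eq_bigr => -[].
by rewrite (bigD1 v).
Qed.

Lemma nonexpansive_cont_on (T T' : finType) (X : {ffun T -> R} -> Prop)
    (f : {ffun T -> R} -> {ffun T' -> R}) :
  (forall a b, X a -> X b -> fdist (f a) (f b) <= fdist a b) -> cont_on X f.
Proof.
move=> f_le a Xa e e_gt0; exists e; split => // b Xb ab_lt.
exact: le_lt_trans (f_le a b Xa Xb) ab_lt.
Qed.

End FiniteDistance.

Section PinnedVertex.
Variables (R : realType) (n : nat) (L : linkage R n) (v : lvert L).

Definition pinned_ext (b : {ffun 'I_n -> R}) : {ffun lvert L * 'I_n -> R} :=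
  [ffun p => if p.1 == v then b p.2 else lmu L p.1 0 p.2].

Lemma rho_pinned_ext b : rho v (pinned_ext b) = b.
Proof. by apply/ffunP => i; rewrite !ffunE eqxx. Qed.

Lemma fdist_rho_le a b : fdist (rho v a) (rho v b) <= fdist a b.
Proof.
rewrite (fdist_pairD1 v) /fdist; under eq_bigr do rewrite !ffunE.
have rest_ge0 : 0 <= \sum_(w | w != v) \sum_i (a (w, i) - b (w, i)) ^+ 2.
  by rewrite sumr_ge0 // => w _; rewrite sumr_ge0 // => i _; rewrite sqr_ge0.
by rewrite ler_sqrt ?lerDl // addr_ge0 // sumr_ge0 // => i _; rewrite sqr_ge0.
Qed.

Lemma fdist_pinned_ext a b : fdist (pinned_ext a) (pinned_ext b) = fdist a b.
Proof.
rewrite (fdist_pairD1 v) [X in _ + X]big1 ?addr0 => [|w /negbTE wv].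
  by congr Num.sqrt; apply: eq_bigr => i _; rewrite !ffunE eqxx.
by apply: big1 => i _; rewrite !ffunE /= wv subrr expr0n.
Qed.

Lemma polymap_on_rho X : polymap_on X (rho v).
Proof.
exists (fun i => mpoly.mpolyX R (mpoly.mnm1 (enum_rank (v, i)))) => a _ i.
by rewrite mpoly.mevalXU enum_rankK ffunE.
Qed.

Lemma polymap_on_pinned_ext Y : polymap_on Y pinned_ext.
Proof.
exists (fun p : lvert L * 'I_n => if p.1 == v
          then mpoly.mpolyX R (mpoly.mnm1 (enum_rank p.2))
          else mpoly.mpolyC _ (lmu L p.1 0 p.2)) => b _ [w i].
rewrite ffunE /=; case: eqP => _; first by rewrite mpoly.mevalXU enum_rankK.
by rewrite mpoly.mevalC.
Qed.

Lemma eq_config (psi1 psi2 : lvert L -> 'rV[R]_n) :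
  psi1 =1 psi2 -> config L psi1 <-> config L psi2.
Proof.
suff to_config p1 p2 : p1 =1 p2 -> config L p1 -> config L p2.
  by move=> e; split; apply: to_config => // u; rewrite e.
move=> e [fix_p1 len_p1]; split => [u u_fix | u w uw]; rewrite -!e.
  exact: fix_p1.
exact: len_p1.
Qed.

Lemma cspace_pinned_ext b :
  cspace L (pinned_ext b) <->
  config L (fun w => if w == v then \row_i b i else lmu L w).
Proof.
apply: eq_config => w; apply/rowP => i; rewrite !mxE ffunE /=.
by case: eqP => _; rewrite ?mxE.
Qed.

Hypothesis pinned : forall w, w != v -> w \in lfixed L.

Lemma pinned_ext_rho a : cspace L a -> pinned_ext (rho v a) = a.
Proof.
move=> [fixed _]; apply/ffunP => -[w i]; rewrite !ffunE /=.
by case: eqP => [-> // | /eqP wv]; rewrite -(fixed w (pinned wv)) mxE.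
Qed.

Lemma rho_isomorphism (Y : {ffun 'I_n -> R} -> Prop) :
  (forall b, Y b <-> cspace L (pinned_ext b)) ->
  isomorphism (cspace L) Y (rho v).
Proof.
move=> YE; exists pinned_ext.
split; last split; last split; last split; last split; last split; last split.
- by move=> a Ca; apply/YE; rewrite pinned_ext_rho.
- by move=> b /YE.
- exact: pinned_ext_rho.
- by move=> b _; apply: rho_pinned_ext.
- by apply: nonexpansive_cont_on => a b _ _; apply: fdist_rho_le.
- by apply: nonexpansive_cont_on => a b _ _; rewrite fdist_pinned_ext.
- exact: polymap_on_rho.
- exact: polymap_on_pinned_ext.
Qed.

End PinnedVertex.

Section SphereLinkage.
Variables (R : realType) (n m : nat) (c : 'rV[R]_n) (r : R) (U : 'M[R]_(m, n)).
Hypothesis r_gt0 : 0 < r.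
Local Notation vertex := (option (option 'I_n)).

(* Vertices: [None] is the free vertex (its [lmu] value is never used),
   [Some None] the anchor at [c], and [Some (Some j)] the anchor at
   [c + arm (Some (Some j))]. *)
Definition arm (u : vertex) : 'rV[R]_n :=
  if u is Some (Some j) then (col j (cokermx U))^T else 0.

Definition star_edges : {set {set vertex}} :=
  [set e : {set vertex} | (None \in e) && (#|e| == 2)%N].

(* Since [arm None = 0], on the edge [{None, u}] this is the bar length
   [sqrt (r^2 + |arm u|^2)]. *)
Definition bar_len (e : {set vertex}) : R :=
  Num.sqrt (r ^+ 2 + \sum_(u in e) enorm (arm u) ^+ 2).

Lemma star_edges_card e : e \in star_edges -> #|e| = 2%N.
Proof. by rewrite inE => /andP[_ /eqP]. Qed.

Lemma bar_len_gt0 e : e \in star_edges -> 0 < bar_len e.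
Proof.
move=> _; rewrite sqrtr_gt0 ltr_wpDr ?exprn_gt0 // sumr_ge0 // => u _.
exact: sqr_ge0.
Qed.

Definition sphere_linkage : linkage R n :=
  Linkage star_edges_card bar_len_gt0 [set u | u != None] (fun u => c + arm u).

Lemma bar_len2 u :
  bar_len [set None; u] = Num.sqrt (r ^+ 2 + enorm (arm u) ^+ 2).
Proof.
rewrite /bar_len; case: (eqVneq u None) => [-> | uN].
  by rewrite setUid big_set1.
by rewrite big_setU1 ?in_set1 1?eq_sym //= big_set1 enorm0 expr0n add0r.
Qed.

Lemma sphere_armsP x :
  (forall u, u != None ->
     enorm (x - (c + arm u)) = Num.sqrt (r ^+ 2 + enorm (arm u) ^+ 2)) <->
  (x - c <= U)%MS /\ enorm (x - c) = r.
Proof.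
have armE u : x - (c + arm u) = (x - c) - arm u by rewrite opprD addrA.
split => [bars | [xcU xcr] u _].
  have xcr : enorm (x - c) = r.
    have := bars (Some None) isT.
    by rewrite armE /= enorm0 subr0 expr0n addr0 sqrtr_sqr gtr0_norm.
  split => //; apply/submx_dotrP => j; apply/enormB_pythagoras.
  by rewrite -(armE (Some (Some j))) xcr; apply: bars.
rewrite (armE u) -xcr; apply/enormB_pythagoras.
by case: u => [[j|]|] /=; rewrite ?dotr0 //; move/submx_dotrP: xcU.
Qed.

Lemma sphere_linkage_config psi :
  config sphere_linkage psi <->
  (forall u, u != None -> psi u = c + arm u) /\
  (psi None - c <= U)%MS /\ enorm (psi None - c) = r.
Proof.
rewrite -sphere_armsP; split => [[fixed bars] | [fixed bars]].
  have fixedE u : u != None -> psi u = c + arm u.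
    by move=> uN; apply: fixed; rewrite inE.
  split=> // u uN; rewrite -fixedE // -bar_len2; apply: bars.
  by rewrite inE set21 cards2 (eq_sym None) uN.
split=> [u | u w]; first by rewrite inE; apply: fixed.
rewrite inE cards2 in_set2 => /andP[/orP[] /eqP <-].
  case: (eqVneq w None) => [//= | wN _].
  by rewrite /= bar_len2 (fixed w wN) bars.
case: (eqVneq u None) => [//= | uN _].
by rewrite /= setUC bar_len2 -opprB enormN (fixed u uN) bars.
Qed.

End SphereLinkage.

Theorem lemma4p4 (R : realType) (n k : nat) (S : 'rV[R]_n -> Prop) :
  round_sphere k S ->
  exists (L : linkage R n) (v : lvert L),
    (forall x : 'rV[R]_n, S x <-> exists phi, config L phi /\ phi v = x) /\
    isomorphism (cspace L) (fun b : {ffun 'I_n -> R} => S (\row_i b i)) (rho v).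
Proof.
move=> [c [r [U [r_gt0 [_ SE]]]]].
pose L := sphere_linkage c U r_gt0.
have configE psi :
    config L psi <-> (forall u, u != None -> psi u = lmu L u) /\ S (psi None).
  by rewrite sphere_linkage_config SE.
exists L, None; split.
  move=> x; split => [Sx | [phi [/configE[_ Sphi] <-]]] //.
  exists (fun u => if u == None then x else lmu L u); split => //.
  by apply/configE; split => // u /negbTE ->.
apply: rho_isomorphism => [u | b]; first by rewrite inE.
rewrite cspace_pinned_ext configE eqxx.
by split => [Sb | []] //; split => // u /negbTE ->.
Qed.
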